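(* Let $\Gamma_1=(V_1,E_1)$ be a graph of maximum degree $\Delta_1$ and let $\Gamma_2=(V_2,E_2)$ be a graph of maximum degree $\Delta_2$ and minimum degree $\delta_2$. Let $S\subseteq V_1$. (i) If $S$ is a global offensive $k$-alliance in $\Gamma_1$, then $S\times V_2$ is a global offensive $(k-\Delta_2)$-alliance in $\Gamma_1\times\Gamma_2$. (ii) If $S\times V_2$ is a global offensive $k$-alliance in $\Gamma_1\times\Gamma_2$, then $S$ is a global offensive $(k+\delta_2)$-alliance in $\Gamma_1$; moreover, $k\le\Delta_1-\delta_2$.
   Context: Graphs are finite and simple. In a graph $G=(V,E)$, for $S\subseteq V$ and $v\in V$, $\delta_S(v)$ is the number of neighbours of $v$ in $S$, $\overline{S}=V\setminus S$, and $\partial(S)$ the set of vertices of $\overline{S}$ with a neighbour in $S$. A nonempty $S$ is an offensive $k$-alliance in $G$ if $\delta_S(v)\ge\delta_{\overline{S}}(v)+k$ for every $v\in\partial(S)$, and a global offensive $k$-alliance if moreover it is dominating (every vertex of $\overline{S}$ has a neighbour in $S$). The Cartesian product $\Gamma_1\times\Gamma_2$ has vertex set $V_1\times V_2$, with $(u,v)\sim(u',v')$ iff either $u=u'$ and $v\sim v'$, or $v=v'$ and $u\sim u'$. *)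

From mathcomp Require Import all_boot all_order all_algebra.
Set Implicit Arguments. Unset Strict Implicit. Unset Printing Implicit Defensive.
Import Order.TTheory GRing.Theory Num.Theory.

(* A finite simple graph: vertex set a finType T, adjacency e : rel T,
   assumed symmetric and irreflexive (hypotheses in the theorem). *)

Section Graph.
Variables (T : finType) (e : rel T).

Definition deltaS (S : {set T}) (v : T) : nat := #|[set u in S | e v u]|.

Definition deg (v : T) : nat := #|[set u | e v u]|.

(* maximum degree (0 for the empty graph) *)
Definition maxdeg : nat := \max_(v : T) deg v.

(* minimum degree (for nonempty T this is the true minimum, since deg v < #|T|) *)
Definition mindeg : nat := \big[minn/#|T|]_(v : T) deg v.

Definition boundary (S : {set T}) : {set T} :=
  [set v in ~: S | [exists u in S, e v u]].

Definition offensive_alliance (k : int) (S : {set T}) : Prop :=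
  S != set0 /\
  forall v, v \in boundary S -> ((deltaS (~: S) v)%:Z + k <= (deltaS S v)%:Z)%R.

Definition dominating (S : {set T}) : Prop :=
  forall v, v \notin S -> exists2 u, u \in S & e v u.

Definition global_offensive_alliance (k : int) (S : {set T}) : Prop :=
  offensive_alliance k S /\ dominating S.

End Graph.

Definition cart_rel (T1 T2 : finType) (e1 : rel T1) (e2 : rel T2) : rel (T1 * T2) :=
  fun x y => ((x.1 == y.1) && e2 x.2 y.2) || ((x.2 == y.2) && e1 x.1 y.1).

From mathcomp Require Import all_boot all_order all_algebra zify.
Import Order.TTheory GRing.Theory Num.Theory.
Set Implicit Arguments. Unset Strict Implicit. Unset Printing Implicit Defensive.

(* For u outside S, the neighbours of (u, v) in S x V2 are the (x, v) with x a
   neighbour of u in S, while its neighbours outside S x V2 are the (x, v) with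
   x a neighbour of u outside S together with the deg v vertices (u, y) of its
   own fibre.  So the defect delta_S - delta_(~S) drops by exactly deg v, which
   lies between delta_2 and Delta_2; both parts follow, and the degree bound in
   (ii) holds because any boundary vertex u gives k + delta_2 <= deg u. *)

Section Alliances.
Variables (T : finType) (e : rel T).

Lemma mindeg_le_deg v : mindeg e <= deg e v.
Proof.
rewrite /mindeg; have : v \in index_enum T by rewrite mem_index_enum.
elim: (index_enum T) => [//|a r IHr]; rewrite in_cons big_cons.
case/orP=> [/eqP <-|vr]; first exact: geq_minl.
exact: leq_trans (geq_minr _ _) (IHr vr).
Qed.

Lemma deg_le_maxdeg v : deg e v <= maxdeg e.
Proof. exact: leq_bigmax. Qed.

Lemma deltaS_le_deg S v : deltaS e S v <= deg e v.
Proof. by apply: subset_leq_card; apply/subsetP=> x; rewrite !inE => /andP[]. Qed.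

Lemma in_boundary S u : (u \in boundary e S) = (u \notin S) && [exists x in S, e u x].
Proof. by rewrite inE in_setC. Qed.

Lemma dominating_boundary {S u} : dominating e S -> u \notin S -> u \in boundary e S.
Proof.
move=> domS uS; have [x xS eux] := domS u uS.
by rewrite in_boundary uS; apply/existsP; exists x; rewrite xS.
Qed.

Lemma global_offensive_alliance_le_maxdeg k S :
  global_offensive_alliance e k S -> S != [set: T] -> (k <= (maxdeg e)%:Z)%R.
Proof.
move=> [[_ offS] domS]; rewrite -properT => /properP[_ [u _ uS]].
have := offS u (dominating_boundary domS uS).
have := deltaS_le_deg S u; have := deg_le_maxdeg u; lia.
Qed.

End Alliances.

Section CartesianCylinder.
Variables (T1 T2 : finType) (e1 : rel T1) (e2 : rel T2).
Hypotheses (irr1 : irreflexive e1) (irr2 : irreflexive e2).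
Variable S : {set T1}.

Local Notation e := (cart_rel e1 e2).
Local Notation SX := (setX S [set: T2]).

Lemma in_cylinder u v : ((u, v) \in SX) = (u \in S).
Proof. by rewrite !inE andbT. Qed.

Lemma cylinder_eq0 : 0 < #|T2| -> (SX == set0) = (S == set0).
Proof. by move=> T2_gt0; rewrite -!cards_eq0 cardsX cardsT muln_eq0 [#|T2| == 0]eqn0Ngt T2_gt0 orbF. Qed.

Lemma deltaS_cylinder u v : u \notin S -> deltaS e SX (u, v) = deltaS e1 S u.
Proof.
move=> uS; rewrite /deltaS.
suff -> : [set w in SX | e (u, v) w] = setX [set x in S | e1 u x] [set v].
  by rewrite cardsX cards1 muln1.
apply/setP=> [[x y]]; rewrite !inE /cart_rel /=.
case: (eqVneq u x) => [<-|_]; first by rewrite (negbTE uS).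
by rewrite [y == v]eq_sym; case: (x \in S); case: (v == y); rewrite ?andbF ?andbT.
Qed.

Lemma deltaS_cylinderC u v :
  u \notin S -> deltaS e (~: SX) (u, v) = deg e2 v + deltaS e1 (~: S) u.
Proof.
move=> uS; rewrite /deltaS /deg.
pose fibre := setX [set u] [set y | e2 v y].
pose layer := setX [set x in ~: S | e1 u x] [set v].
suff -> : [set w in ~: SX | e (u, v) w] = fibre :|: layer.
  rewrite cardsU !cardsX !cards1 muln1 mul1n.
  suff -> : fibre :&: layer = set0 by rewrite cards0 subn0.
  apply/setP=> [[x y]]; rewrite !inE.
  by case: (eqVneq y v) => [->|]; rewrite ?irr2 !andbF.
apply/setP=> [[x y]]; rewrite !inE /cart_rel /= andbT.
case: (eqVneq u x) => [<-|_]; first by rewrite uS irr1 !andbF orbF.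
by rewrite [y == v]eq_sym; case: (x \in S); case: (v == y); rewrite ?andbF ?andbT.
Qed.

Lemma boundary_cylinder u v : ((u, v) \in boundary e SX) = (u \in boundary e1 S).
Proof.
rewrite !in_boundary in_cylinder; case uS: (u \in S) => //=.
apply/existsP/existsP => [[[x y]]|[x /andP[xS eux]]].
  rewrite in_cylinder /cart_rel /= => /andP[xS /orP[]/andP[/eqP ux exy]].
    by rewrite ux xS in uS.
  by exists x; rewrite xS.
by exists (x, v); rewrite in_cylinder xS /cart_rel /= eqxx eux orbT.
Qed.

Lemma dominating_cylinder : dominating e1 S -> dominating e SX.
Proof.
move=> domS [u v]; rewrite in_cylinder => uS.
have [x xS eux] := domS u uS; exists (x, v); first by rewrite in_cylinder.
by rewrite /cart_rel /= eqxx eux orbT.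
Qed.

Lemma dominating_of_cylinder : 0 < #|T2| -> dominating e SX -> dominating e1 S.
Proof.
rewrite -cardsT card_gt0 => /set0Pn[v0 _] domSX u uS.
have uv0 : (u, v0) \notin SX by rewrite in_cylinder.
have [[x y]] := domSX (u, v0) uv0.
rewrite in_cylinder /cart_rel /= => xS /orP[]/andP[/eqP ux exy].
  by rewrite ux xS in uS.
by exists x.
Qed.

Lemma defect_cylinder k u v :
  u \in boundary e1 S ->
  ((deltaS e (~: SX) (u, v))%:Z + k <= (deltaS e SX (u, v))%:Z)%R =
  ((deltaS e1 (~: S) u)%:Z + (k + (deg e2 v)%:Z) <= (deltaS e1 S u)%:Z)%R.
Proof.
rewrite in_boundary => /andP[uS _].
rewrite deltaS_cylinder // deltaS_cylinderC // PoszD.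
by rewrite -addrA addrCA [(Posz (deg e2 v) + k)%R]addrC.
Qed.

Hypothesis T2_gt0 : 0 < #|T2|.

Lemma offensive_cylinder k :
  offensive_alliance e1 k S -> offensive_alliance e (k - (maxdeg e2)%:Z)%R SX.
Proof.
move=> [S0 offS]; split=> [|[u v]]; first by rewrite cylinder_eq0.
rewrite boundary_cylinder => bu; rewrite defect_cylinder //.
have := offS u bu; have := deg_le_maxdeg e2 v; lia.
Qed.

Lemma offensive_of_cylinder k :
  offensive_alliance e k SX -> offensive_alliance e1 (k + (mindeg e2)%:Z)%R S.
Proof.
move: T2_gt0; rewrite -cardsT card_gt0 => /set0Pn[v0 _] [SX0 offSX].
split=> [|u bu]; first by rewrite -cylinder_eq0.
have := offSX (u, v0); rewrite boundary_cylinder defect_cylinder // => /(_ bu).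
have := mindeg_le_deg e2 v0; lia.
Qed.

End CartesianCylinder.

Theorem mainTheorem13 (T1 T2 : finType) (e1 : rel T1) (e2 : rel T2)
  (sym1 : symmetric e1) (irr1 : irreflexive e1)
  (sym2 : symmetric e2) (irr2 : irreflexive e2)
  (ne2 : 0 < #|T2|) (S : {set T1}) (k : int) :
  (global_offensive_alliance e1 k S ->
     global_offensive_alliance (cart_rel e1 e2) (k - (maxdeg e2)%:Z)%R
       (setX S [set: T2]))
  /\
  (global_offensive_alliance (cart_rel e1 e2) k (setX S [set: T2]) ->
     global_offensive_alliance e1 (k + (mindeg e2)%:Z)%R S /\
     (S != [set: T1] -> (k <= (maxdeg e1)%:Z - (mindeg e2)%:Z)%R)).
Proof.
split=> [[offS domS]|[offSX domSX]].
  split; first exact: offensive_cylinder.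
  exact: dominating_cylinder.
have galS : global_offensive_alliance e1 (k + (mindeg e2)%:Z)%R S.
  split; first exact: offensive_of_cylinder offSX.
  exact: dominating_of_cylinder domSX.
split=> // /(global_offensive_alliance_le_maxdeg galS); lia.
Qed.
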